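(* Let $\sigma=\{ijkh\}$ be a truncated tetrahedron with weight $\Phi$ taking values in $[0,\frac{\pi}{2}]$ on its six edges, and let $(r_i,r_j,r_k,r_h)\in\mathbb{R}^4_{>0}$. The hyper-ideal tetrahedron with edge lengths $l_{\mu\nu}=\cosh^{-1}(\sinh r_\mu\sinh r_\nu+\cos\Phi_{\mu\nu}\cosh r_\mu\cosh r_\nu)$ is non-degenerate in $\mathbb{H}^3$ if and only if $Q_2>0$.
   Context: A hyper-ideal tetrahedron is a compact convex polyhedron in $\mathbb{H}^3$ diffeomorphic to a truncated tetrahedron with four right-angled hyperbolic hexagonal faces and four hyperbolic triangular vertex triangles $\triangle_i,\triangle_j,\triangle_k,\triangle_h$, each orthogonal to its three adjacent hexagons; $l_{\mu\nu}$ is the length of the edge joining $\triangle_\mu$ and $\triangle_\nu$. The lengths are called non-degenerate if there is such a (non-degenerate) hyper-ideal tetrahedron with these edge lengths. Notation: $t_\nu=\tanh r_\nu$; $a=\cos\Phi_{ij}$, $b=\cos\Phi_{ik}$, $c=\cos\Phi_{ih}$, $d=\cos\Phi_{jk}$, $e=\cos\Phi_{jh}$, $f=\cos\Phi_{kh}$. Define $Q_3=2abef+2acdf+2bcde+2abd+2ace+2bcf+2def+a^2+b^2+c^2+d^2+e^2+f^2-a^2f^2-b^2e^2-c^2d^2-1$ and $Q_2=t_i^2(1-d^2-e^2-f^2-2def)+t_j^2(1-b^2-c^2-f^2-2bcf)+t_k^2(1-a^2-c^2-e^2-2ace)+t_h^2(1-a^2-b^2-d^2-2abd)+2t_it_j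[(1-f^2)a+bd+ce+bef+cdf]+2t_it_k[(1-e^2)b+ad+cf+aef+cde]+2t_it_h[(1-d^2)c+ae+bf+adf+bde]+2t_jt_k[(1-c^2)d+ab+ef+acf+bce]+2t_jt_h[(1-b^2)e+ac+df+abf+bcd]+2t_kt_h[(1-a^2)f+bc+de+abe+acd]+Q_3$.
   Formalization: For all six edges, $\sinh r_\mu\sinh r_\nu+\cos\Phi_{\mu\nu}\cosh r_\mu\cosh r_\nu$ is assumed to exceed 1, so every edge length $l_{\mu\nu}$ exists and is positive. The statement above fails without it. *)

From Stdlib Require Import Reals.
Open Scope R_scope.

Definition vec4 : Type := (R * R * R * R)%type.

Definition mink (x y : vec4) : R :=
  let '(x0, x1, x2, x3) := x in
  let '(y0, y1, y2, y3) := y in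
  x0 * y0 + x1 * y1 + x2 * y2 - x3 * y3.

Definition lin_comb4 (a b c d : R) (u v w z : vec4) : vec4 :=
  let '(u0, u1, u2, u3) := u in
  let '(v0, v1, v2, v3) := v in
  let '(w0, w1, w2, w3) := w in
  let '(z0, z1, z2, z3) := z in
  (a*u0 + b*v0 + c*w0 + d*z0, a*u1 + b*v1 + c*w1 + d*z1,
   a*u2 + b*v2 + c*w2 + d*z2, a*u3 + b*v3 + c*w3 + d*z3).

Definition lin_indep4 (u v w z : vec4) : Prop :=
  forall a b c d : R, lin_comb4 a b c d u v w z = (0, 0, 0, 0) ->
    a = 0 /\ b = 0 /\ c = 0 /\ d = 0.

(* A (non-degenerate) hyper-ideal tetrahedron in the hyperboloid model of H^3
   is determined by its four hyper-ideal vertices, encoded by the unit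
   space-like vectors v_mu (<v_mu,v_mu> = 1) polar to the truncating planes
   (the planes of the vertex triangles), which are linearly independent
   (non-degeneracy) and pairwise ultraparallel; the length of the edge joining
   triangle_mu and triangle_nu is the distance l_{mu nu} > 0 between the polar
   planes, i.e. <v_mu, v_nu> = - cosh l_{mu nu}.
   [nondeg_hyperideal lij lik lih ljk ljh lkh] : there is a non-degenerate
   hyper-ideal tetrahedron with these six edge lengths. *)
Definition nondeg_hyperideal (lij lik lih ljk ljh lkh : R) : Prop :=
  0 < lij /\ 0 < lik /\ 0 < lih /\ 0 < ljk /\ 0 < ljh /\ 0 < lkh /\
  exists vi vj vk vh : vec4,
    mink vi vi = 1 /\ mink vj vj = 1 /\ mink vk vk = 1 /\ mink vh vh = 1 /\
    mink vi vj = - cosh lij /\ mink vi vk = - cosh lik /\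
    mink vi vh = - cosh lih /\ mink vj vk = - cosh ljk /\
    mink vj vh = - cosh ljh /\ mink vk vh = - cosh lkh /\
    lin_indep4 vi vj vk vh.

Definition Q3 (a b c d e f : R) : R :=
  2*a*b*e*f + 2*a*c*d*f + 2*b*c*d*e + 2*a*b*d + 2*a*c*e + 2*b*c*f + 2*d*e*f
  + a^2 + b^2 + c^2 + d^2 + e^2 + f^2 - a^2*f^2 - b^2*e^2 - c^2*d^2 - 1.

Definition Q2 (ti tj tk th a b c d e f : R) : R :=
  ti^2 * (1 - d^2 - e^2 - f^2 - 2*d*e*f)
  + tj^2 * (1 - b^2 - c^2 - f^2 - 2*b*c*f)
  + tk^2 * (1 - a^2 - c^2 - e^2 - 2*a*c*e)
  + th^2 * (1 - a^2 - b^2 - d^2 - 2*a*b*d)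
  + 2*ti*tj * ((1 - f^2)*a + b*d + c*e + b*e*f + c*d*f)
  + 2*ti*tk * ((1 - e^2)*b + a*d + c*f + a*e*f + c*d*e)
  + 2*ti*th * ((1 - d^2)*c + a*e + b*f + a*d*f + b*d*e)
  + 2*tj*tk * ((1 - c^2)*d + a*b + e*f + a*c*f + b*c*e)
  + 2*tj*th * ((1 - b^2)*e + a*c + d*f + a*b*f + b*c*d)
  + 2*tk*th * ((1 - a^2)*f + b*c + d*e + a*b*e + a*c*d)
  + Q3 a b c d e f.

Definition cosh_len (rmu rnu Phi : R) : R :=
  sinh rmu * sinh rnu + cos Phi * cosh rmu * cosh rnu.

(* The polar vectors of the four truncating planes are unit space-like vectors of R^{3,1}
   whose Gram matrix G has 1 on the diagonal and -cosh l_{mu nu} off it.  As the Minkowski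
   form has determinant -1, det G = -(det[v_i; v_j; v_k; v_h])^2, so independent vectors give
   det G < 0; conversely, when det G < 0 and the leading 3x3 minor is negative (automatic,
   since every cosh l > 1), a triangular construction realizes G by independent vectors.
   Finally cosh l_{mu nu} = cosh r_mu cosh r_nu (t_mu t_nu + cos Phi_{mu nu}) and
   1 = cosh^2 r (1 - t^2), so G is the congruence by diag(cosh r_mu) of a matrix whose
   determinant is -Q_2. *)

From Stdlib Require Import Reals Lra Psatz.
Open Scope R_scope.

Definition det3 (a11 a12 a13 a21 a22 a23 a31 a32 a33 : R) : R :=
  a11 * (a22 * a33 - a23 * a32) - a12 * (a21 * a33 - a23 * a31)
  + a13 * (a21 * a32 - a22 * a31).

(* Chosen so that [mink (cross3 u v w) z] is the determinant with rows [u, v, w, z]. *)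
Definition cross3 (u v w : vec4) : vec4 :=
  let '(u0, u1, u2, u3) := u in
  let '(v0, v1, v2, v3) := v in
  let '(w0, w1, w2, w3) := w in
  (- det3 u1 u2 u3 v1 v2 v3 w1 w2 w3, det3 u0 u2 u3 v0 v2 v3 w0 w2 w3,
   - det3 u0 u1 u3 v0 v1 v3 w0 w1 w3, - det3 u0 u1 u2 v0 v1 v2 w0 w1 w2).

Definition det4 (u v w z : vec4) : R := mink (cross3 u v w) z.

Definition scale4 (c : R) (x : vec4) : vec4 :=
  let '(x0, x1, x2, x3) := x in (c * x0, c * x1, c * x2, c * x3).

Definition sym_det3 (d1 d2 d3 g12 g13 g23 : R) : R :=
  det3 d1 g12 g13 g12 d2 g23 g13 g23 d3.

Definition sym_det4 (d1 d2 d3 d4 g12 g13 g14 g23 g24 g34 : R) : R :=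
  det4 (d1, g12, g13, g14) (g12, d2, g23, g24) (g13, g23, d3, g34)
       (g14, g24, g34, d4).

Definition gram3 (u v w : vec4) : R :=
  sym_det3 (mink u u) (mink v v) (mink w w) (mink u v) (mink u w) (mink v w).

Definition gram4 (u v w z : vec4) : R :=
  sym_det4 (mink u u) (mink v v) (mink w w) (mink z z)
    (mink u v) (mink u w) (mink u z) (mink v w) (mink v z) (mink w z).

Definition unit_gram_realizable (g12 g13 g14 g23 g24 g34 : R) : Prop :=
  exists u v w z : vec4,
    mink u u = 1 /\ mink v v = 1 /\ mink w w = 1 /\ mink z z = 1 /\
    mink u v = g12 /\ mink u w = g13 /\ mink u z = g14 /\
    mink v w = g23 /\ mink v z = g24 /\ mink w z = g34 /\
    lin_indep4 u v w z.

Ltac expand_vec4 :=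
  repeat match goal with v : vec4 |- _ => destruct v as [[[? ?] ?] ?] end;
  cbn; unfold det3.

Lemma gram4_eq (u v w z : vec4) : gram4 u v w z = - det4 u v w z ^ 2.
Proof. unfold gram4, sym_det4, det4. expand_vec4. ring. Qed.

Lemma gram3_eq (u v w : vec4) :
  gram3 u v w = - mink (cross3 u v w) (cross3 u v w).
Proof. unfold gram3, sym_det3. expand_vec4. ring. Qed.

Lemma lin_comb4_cofactors (u v w z x : vec4) :
  lin_comb4 (- mink (cross3 v w z) x) (mink (cross3 w z u) x)
            (- mink (cross3 z u v) x) (mink (cross3 u v w) x) u v w z
  = scale4 (det4 u v w z) x.
Proof. unfold det4. expand_vec4. f_equal; [f_equal; [f_equal|]|]; ring. Qed.

Lemma scale4_0 (x : vec4) : scale4 0 x = (0, 0, 0, 0).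
Proof. expand_vec4. f_equal; [f_equal; [f_equal|]|]; ring. Qed.

Lemma det4_lin_comb4 (a b c d : R) (u v w z : vec4) :
  let y := lin_comb4 a b c d u v w z in
  det4 y v w z = a * det4 u v w z /\ det4 u y w z = b * det4 u v w z /\
  det4 u v y z = c * det4 u v w z /\ det4 u v w y = d * det4 u v w z.
Proof. unfold det4. expand_vec4. repeat split; ring. Qed.

Lemma lin_indep4_of_det4_neq0 (u v w z : vec4) :
  det4 u v w z <> 0 -> lin_indep4 u v w z.
Proof.
  intros Hdet a b c d Hcomb.
  destruct (det4_lin_comb4 a b c d u v w z) as (Ha & Hb & Hc & Hd).
  cbv zeta in Ha, Hb, Hc, Hd; rewrite Hcomb in Ha, Hb, Hc, Hd.
  assert (Hzero : det4 (0, 0, 0, 0) v w z = 0 /\ det4 u (0, 0, 0, 0) w z = 0 /\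
                  det4 u v (0, 0, 0, 0) z = 0 /\ det4 u v w (0, 0, 0, 0) = 0).
  { unfold det4. expand_vec4. repeat split; ring. }
  destruct Hzero as (Z1 & Z2 & Z3 & Z4).
  repeat split; apply (Rmult_eq_reg_r (det4 u v w z)); lra.
Qed.

Lemma lin_indep4_of_gram4_neq0 (u v w z : vec4) :
  gram4 u v w z <> 0 -> lin_indep4 u v w z.
Proof.
  intro Hgram; apply lin_indep4_of_det4_neq0; intro Hdet.
  apply Hgram; rewrite gram4_eq, Hdet; ring.
Qed.

(* If [det4 u v w z = 0], the cofactor combination for [x = cross3 u v w] vanishes, so by
   independence its last coefficient, [mink x x = - gram3 u v w], is zero. *)
Lemma det4_neq0_of_lin_indep4 (u v w z : vec4) :
  lin_indep4 u v w z -> gram3 u v w <> 0 -> det4 u v w z <> 0.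
Proof.
  intros Hind Hgram3 Hdet.
  pose proof (lin_comb4_cofactors u v w z (cross3 u v w)) as Hcomb.
  rewrite Hdet, scale4_0 in Hcomb.
  destruct (Hind _ _ _ _ Hcomb) as (_ & _ & _ & Hnorm).
  apply Hgram3; rewrite gram3_eq, Hnorm; ring.
Qed.

Lemma gram4_neg_of_lin_indep4 (u v w z : vec4) :
  lin_indep4 u v w z -> gram3 u v w <> 0 -> gram4 u v w z < 0.
Proof.
  intros Hind Hgram3.
  pose proof (det4_neq0_of_lin_indep4 u v w z Hind Hgram3) as Hdet.
  rewrite gram4_eq, <- Rsqr_pow2.
  pose proof (Rsqr_pos_lt _ Hdet). lra.
Qed.

(* Gram-Schmidt in coordinates: each new vector enters one new coordinate, whose square
   ([s ^ 2], [Y], [Z]) is, up to sign, a ratio of consecutive leading principal minors of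
   the Gram matrix. *)
Section UnitGramConstruction.

Variables g12 g13 g14 g23 g24 g34 : R.
Hypothesis g12_sq_gt1 : 1 < g12 ^ 2.
Hypothesis minor3_neg : sym_det3 1 1 1 g12 g13 g23 < 0.
Hypothesis det_neg : sym_det4 1 1 1 1 g12 g13 g14 g23 g24 g34 < 0.

Let s := sqrt (g12 ^ 2 - 1).
Let a3 := (g12 * g13 - g23) / s.
Let Y := 1 - g13 ^ 2 + a3 ^ 2.
Let y := sqrt Y.
Let b3 := (g12 * g14 - g24) / s.
Let b1 := (g34 - g13 * g14 + a3 * b3) / y.
Let Z := 1 - g14 ^ 2 - b1 ^ 2 + b3 ^ 2.

Let v1 : vec4 := (1, 0, 0, 0).
Let v2 : vec4 := (g12, 0, 0, s).
Let v3 (t : R) : vec4 := (g13, t, 0, a3).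
Let v4 (t : R) : vec4 := (g14, b1, t, b3).

Lemma s_pos : 0 < s.
Proof. apply sqrt_lt_R0; lra. Qed.

Lemma s_sq : s ^ 2 = g12 ^ 2 - 1.
Proof. rewrite <- Rsqr_pow2; apply Rsqr_sqrt; lra. Qed.

Lemma v1_v2_products : mink v1 v1 = 1 /\ mink v1 v2 = g12 /\ mink v2 v2 = 1.
Proof. cbn -[s]. pose proof s_sq. repeat split; nra. Qed.

Lemma v3_products (t : R) :
  mink v1 (v3 t) = g13 /\ mink v2 (v3 t) = g23 /\ mink (v3 t) (v3 t) = 1 - Y + t ^ 2.
Proof.
  pose proof s_pos. cbn -[s]. unfold Y, a3. split; [ring | split; [field; lra | ring]].
Qed.

(* [v3 0] lies in the plane of [v1] and [v2], so its Gram determinant with them vanishes. *)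
Lemma Y_pos : 0 < Y.
Proof.
  assert (Hflat : gram3 v1 v2 (v3 0) = 0) by (rewrite gram3_eq; cbn; unfold det3; ring).
  unfold gram3 in Hflat.
  destruct v1_v2_products as (H11 & H12 & H22); destruct (v3_products 0) as (H13 & H23 & H33).
  rewrite H11, H12, H22, H13, H23, H33 in Hflat.
  assert (Hexp : sym_det3 1 1 (1 - Y + 0 ^ 2) g12 g13 g23
                 = sym_det3 1 1 1 g12 g13 g23 + Y * s ^ 2)
    by (rewrite s_sq; unfold sym_det3, det3; ring).
  pose proof s_pos. nra.
Qed.

Lemma y_sq : y ^ 2 = Y.
Proof. unfold y; rewrite <- Rsqr_pow2; apply Rsqr_sqrt; pose proof Y_pos; lra. Qed.

Lemma v4_products (t : R) :
  mink v1 (v4 t) = g14 /\ mink v2 (v4 t) = g24 /\ mink (v3 y) (v4 t) = g34 /\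
  mink (v4 t) (v4 t) = 1 - Z + t ^ 2.
Proof.
  pose proof s_pos. assert (0 < y) by (apply sqrt_lt_R0, Y_pos).
  cbn -[s y]. unfold Z, b1, b3.
  split; [ring | split; [field; lra | split; [field; lra | ring]]].
Qed.

(* [v4 0] lies in the hyperplane of [v1], [v2] and [v3 y], so its Gram determinant with them
   vanishes. *)
Lemma Z_pos : 0 < Z.
Proof.
  assert (Hflat : gram4 v1 v2 (v3 y) (v4 0) = 0)
    by (rewrite gram4_eq; unfold det4; cbn; unfold det3; ring).
  unfold gram4 in Hflat.
  destruct v1_v2_products as (H11 & H12 & H22); destruct (v3_products y) as (H13 & H23 & H33).
  destruct (v4_products 0) as (H14 & H24 & H34 & H44).
  rewrite y_sq in H33.
  rewrite H11, H12, H22, H13, H23, H33, H14, H24, H34, H44 in Hflat.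
  assert (Hexp : sym_det4 1 1 (1 - Y + Y) (1 - Z + 0 ^ 2) g12 g13 g14 g23 g24 g34
                 = sym_det4 1 1 1 1 g12 g13 g14 g23 g24 g34 - Z * sym_det3 1 1 1 g12 g13 g23)
    by (unfold sym_det4, det4, sym_det3; cbn; unfold det3; ring).
  nra.
Qed.

Lemma unit_gram_realizable_of_det_neg : unit_gram_realizable g12 g13 g14 g23 g24 g34.
Proof.
  set (z := sqrt Z).
  assert (z_sq : z ^ 2 = Z)
    by (unfold z; rewrite <- Rsqr_pow2; apply Rsqr_sqrt; pose proof Z_pos; lra).
  destruct v1_v2_products as (H11 & H12 & H22); destruct (v3_products y) as (H13 & H23 & H33).
  destruct (v4_products z) as (H14 & H24 & H34 & H44).
  rewrite y_sq in H33; rewrite z_sq in H44.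
  exists v1, v2, (v3 y), (v4 z).
  do 10 (split; [lra|]).
  apply lin_indep4_of_gram4_neq0.
  unfold gram4; rewrite H11, H12, H22, H13, H23, H33, H14, H24, H34, H44.
  replace (1 - Y + Y) with 1 by ring; replace (1 - Z + Z) with 1 by ring. lra.
Qed.

End UnitGramConstruction.

Lemma unit_gram_realizable_iff (g12 g13 g14 g23 g24 g34 : R) :
  1 < g12 ^ 2 -> sym_det3 1 1 1 g12 g13 g23 < 0 ->
  unit_gram_realizable g12 g13 g14 g23 g24 g34 <->
  sym_det4 1 1 1 1 g12 g13 g14 g23 g24 g34 < 0.
Proof.
  intros Hg12 Hminor3; split.
  - intros (u & v & w & z & Huu & Hvv & Hww & Hzz & Huv & Huw & Huz & Hvw & Hvz & Hwz & Hind).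
    assert (Hgram4 := gram4_neg_of_lin_indep4 u v w z Hind).
    unfold gram4, gram3 in Hgram4.
    rewrite Huu, Hvv, Hww, Hzz, Huv, Huw, Huz, Hvw, Hvz, Hwz in Hgram4.
    apply Hgram4; lra.
  - exact (unit_gram_realizable_of_det_neg _ _ _ _ _ _ Hg12 Hminor3).
Qed.

Lemma sym_det3_obtuse_neg (p q r : R) :
  1 < p -> 1 < q -> 1 < r -> sym_det3 1 1 1 (- p) (- q) (- r) < 0.
Proof.
  intros Hp Hq Hr; unfold sym_det3, det3.
  assert (0 < p * q * r) by (apply Rmult_lt_0_compat; [apply Rmult_lt_0_compat|]; lra).
  nra.
Qed.

Lemma cosh_pos (x : R) : 0 < cosh x.
Proof. unfold cosh. pose proof (exp_pos x). pose proof (exp_pos (- x)). lra. Qed.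

Lemma cosh_sq_sub_sinh_sq (x : R) : cosh x ^ 2 - sinh x ^ 2 = 1.
Proof. unfold cosh, sinh. rewrite exp_Ropp. pose proof (exp_pos x). field. lra. Qed.

Lemma cosh_gt_1 (x : R) : 0 < x -> 1 < cosh x.
Proof.
  intro Hx.
  assert (0 < sinh x) by (rewrite <- sinh_0; apply sinh_lt, Hx).
  pose proof (cosh_sq_sub_sinh_sq x). pose proof (cosh_pos x). nra.
Qed.

Lemma cosh_sq_mul_one_sub_tanh_sq (x : R) : cosh x ^ 2 * (1 - tanh x ^ 2) = 1.
Proof.
  pose proof (cosh_pos x). unfold tanh.
  replace (cosh x ^ 2 * (1 - (sinh x / cosh x) ^ 2)) with (cosh x ^ 2 - sinh x ^ 2)
    by (field; lra).
  apply cosh_sq_sub_sinh_sq.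
Qed.

Lemma cosh_len_tanh (r r' phi : R) :
  cosh_len r r' phi = cosh r * cosh r' * (tanh r * tanh r' + cos phi).
Proof.
  unfold cosh_len, tanh. pose proof (cosh_pos r). pose proof (cosh_pos r'). field. lra.
Qed.

Lemma sym_det4_Q2 (ci cj ck ch ti tj tk th a b c d e f : R) :
  sym_det4 (ci ^ 2 * (1 - ti ^ 2)) (cj ^ 2 * (1 - tj ^ 2))
           (ck ^ 2 * (1 - tk ^ 2)) (ch ^ 2 * (1 - th ^ 2))
    (- (ci * cj * (ti * tj + a))) (- (ci * ck * (ti * tk + b)))
    (- (ci * ch * (ti * th + c))) (- (cj * ck * (tj * tk + d)))
    (- (cj * ch * (tj * th + e))) (- (ck * ch * (tk * th + f)))
  = - (ci * cj * ck * ch) ^ 2 * Q2 ti tj tk th a b c d e f.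
Proof. unfold sym_det4, det4, Q2, Q3. cbn. unfold det3. ring. Qed.

Lemma sym_det4_cosh_len (ri rj rk rh pij pik pih pjk pjh pkh : R) :
  sym_det4 1 1 1 1
    (- cosh_len ri rj pij) (- cosh_len ri rk pik) (- cosh_len ri rh pih)
    (- cosh_len rj rk pjk) (- cosh_len rj rh pjh) (- cosh_len rk rh pkh)
  = - (cosh ri * cosh rj * cosh rk * cosh rh) ^ 2
    * Q2 (tanh ri) (tanh rj) (tanh rk) (tanh rh)
         (cos pij) (cos pik) (cos pih) (cos pjk) (cos pjh) (cos pkh).
Proof.
  rewrite !cosh_len_tanh, <- sym_det4_Q2, !cosh_sq_mul_one_sub_tanh_sq. reflexivity.
Qed.

Theorem lemma2p2
  (Phi_ij Phi_ik Phi_ih Phi_jk Phi_jh Phi_kh : R)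
  (r_i r_j r_k r_h : R)
  (lij lik lih ljk ljh lkh : R) :
  0 <= Phi_ij <= PI / 2 -> 0 <= Phi_ik <= PI / 2 -> 0 <= Phi_ih <= PI / 2 ->
  0 <= Phi_jk <= PI / 2 -> 0 <= Phi_jh <= PI / 2 -> 0 <= Phi_kh <= PI / 2 ->
  0 < r_i -> 0 < r_j -> 0 < r_k -> 0 < r_h ->
  (* l_{mu nu} = arccosh(sinh r_mu sinh r_nu + cos Phi_{mu nu} cosh r_mu cosh r_nu),
     presupposed to be a (positive) edge length *)
  0 < lij -> cosh lij = cosh_len r_i r_j Phi_ij ->
  0 < lik -> cosh lik = cosh_len r_i r_k Phi_ik ->
  0 < lih -> cosh lih = cosh_len r_i r_h Phi_ih ->
  0 < ljk -> cosh ljk = cosh_len r_j r_k Phi_jk ->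
  0 < ljh -> cosh ljh = cosh_len r_j r_h Phi_jh ->
  0 < lkh -> cosh lkh = cosh_len r_k r_h Phi_kh ->
  (nondeg_hyperideal lij lik lih ljk ljh lkh <->
   0 < Q2 (tanh r_i) (tanh r_j) (tanh r_k) (tanh r_h)
          (cos Phi_ij) (cos Phi_ik) (cos Phi_ih)
          (cos Phi_jk) (cos Phi_jh) (cos Phi_kh)).
Proof.
  intros _ _ _ _ _ _ _ _ _ _ Lij Cij Lik Cik Lih Cih Ljk Cjk Ljh Cjh Lkh Ckh.
  assert (Hdet : sym_det4 1 1 1 1 (- cosh lij) (- cosh lik) (- cosh lih)
                   (- cosh ljk) (- cosh ljh) (- cosh lkh)
                 = - (cosh r_i * cosh r_j * cosh r_k * cosh r_h) ^ 2
                   * Q2 (tanh r_i) (tanh r_j) (tanh r_k) (tanh r_h)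
                        (cos Phi_ij) (cos Phi_ik) (cos Phi_ih)
                        (cos Phi_jk) (cos Phi_jh) (cos Phi_kh))
    by (rewrite Cij, Cik, Cih, Cjk, Cjh, Ckh; apply sym_det4_cosh_len).
  assert (Hcosh : 0 < (cosh r_i * cosh r_j * cosh r_k * cosh r_h) ^ 2)
    by (apply pow_lt; apply Rmult_lt_0_compat;
        [apply Rmult_lt_0_compat; [apply Rmult_lt_0_compat|]|]; apply cosh_pos).
  pose proof (cosh_gt_1 _ Lij); pose proof (cosh_gt_1 _ Lik); pose proof (cosh_gt_1 _ Ljk).
  change (nondeg_hyperideal lij lik lih ljk ljh lkh) with
    (0 < lij /\ 0 < lik /\ 0 < lih /\ 0 < ljk /\ 0 < ljh /\ 0 < lkh /\
     unit_gram_realizable (- cosh lij) (- cosh lik) (- cosh lih)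
       (- cosh ljk) (- cosh ljh) (- cosh lkh)).
  rewrite unit_gram_realizable_iff, Hdet by (nra || (apply sym_det3_obtuse_neg; assumption)).
  split; [intros (_ & _ & _ & _ & _ & _ & Hneg) | intro HQ; repeat split]; nra.
Qed.
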